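(* Let $A=\mathrm{diag}(G_1,\dots,G_m,[1])\in\mathbb{R}^{n\times n}$ (where the trailing $1\times 1$ block $[1]$ may or may not be present), with $G_j=\begin{bmatrix}c_j&s_j\\-s_j&c_j\end{bmatrix}$, $c_j^2+s_j^2=1$, $s_j\neq 0$, and $0<c_1<c_2<\cdots<c_m$. Let $v_0\in\mathbb{R}^n$ be a unit norm vector with $d(A,v_0)\geq 2$, and consider the iteration ACI($1$): $$\widetilde w_k=(A-\alpha_kI)v_k,\ \alpha_k=v_k^TAv_k,\quad w_k=\widetilde w_k/\|\widetilde w_k\|,\quad \widetilde v_{k+1}=(A^T-\beta_kI)w_k,\ \beta_k=w_k^TAw_k,\quad v_{k+1}=\widetilde v_{k+1}/\|\widetilde v_{k+1}\|.$$ Then the sequences $\{\alpha_k\}$ and $\{\beta_k\}$ converge to limits $\alpha$ and $\beta$ with $\alpha=\beta$, this common value is the real part of an eigenvalue of $A$ (namely $\alpha=\beta=c_j$ for some $j\in\{1,\dots,m\}$), and every limit vector $v_*$ of the sequence $\{v_k\}$ satisfies $d(A,v_* )=2$.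
   Context: $d(A,v)$ denotes the grade of $v$ w.r.t. $A$, i.e. the degree of the monic polynomial $p$ of smallest degree with $p(A)v=0$. $\|\cdot\|$ is the Euclidean norm. $A$ is orthogonal; under the hypotheses all vectors $\widetilde w_k,\widetilde v_{k+1}$ are nonzero. *)

From HB Require Import structures.
From mathcomp Require Import all_boot all_order all_algebra.
From mathcomp Require Import all_classical all_reals all_analysis.
Set Implicit Arguments. Unset Strict Implicit. Unset Printing Implicit Defensive.
Import Order.TTheory GRing.Theory Num.Theory.
Import numFieldNormedType.Exports.
Local Open Scope classical_set_scope.
Local Open Scope ring_scope.

Section Defs.
Variable R : realType.

(* A = diag(G_0, ..., G_{m-1}, [1]) of size 2m + b, the trailing [1] present
   iff b = true; G_k = [c_k s_k; -s_k c_k] occupies rows/cols 2k, 2k+1. *)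
Definition rotA (m : nat) (b : bool) (c s : nat -> R) : 'M[R]_(m.*2 + b) :=
  \matrix_(i, j)
    if ((i : nat)./2 < m)%N then
      if (i : nat)./2 == (j : nat)./2 then
        if i == j :> nat then c (i : nat)./2
        else if ~~ odd i then s (i : nat)./2 else - s (i : nat)./2
      else 0
    else (if i == j :> nat then 1 else 0).

Definition polyAv n (A : 'M[R]_n) (p : {poly R}) (v : 'cV[R]_n) : 'cV[R]_n :=
  \sum_(i < size p) p`_i *: iter i (mulmx A) v.

Definition annih_deg n (A : 'M[R]_n) (v : 'cV[R]_n) (k : nat) : Prop :=
  exists p : {poly R}, [/\ p \is monic, size p = k.+1 & polyAv A p v = 0].

(* grade d(A,v): the smallest degree of a monic annihilating polynomial
   (such a polynomial always exists by Cayley-Hamilton; 0 is a junk default) *)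
Definition grade n (A : 'M[R]_n) (v : 'cV[R]_n) : nat :=
  match pselect (exists k, `[< annih_deg A v k >]) with
  | left h => ex_minn h
  | right _ => 0%N
  end.

Definition enorm n (v : 'cV[R]_n) : R := Num.sqrt (\sum_i v i 0 ^+ 2).

Definition rq n (A : 'M[R]_n) (x : 'cV[R]_n) : R := (x^T *m A *m x) 0 0.

Definition normalize n (x : 'cV[R]_n) : 'cV[R]_n := (enorm x)^-1 *: x.

Definition aci_w n (A : 'M[R]_n) (v : 'cV[R]_n) : 'cV[R]_n :=
  normalize ((A - (rq A v)%:M) *m v).

Definition aci_next n (A : 'M[R]_n) (v : 'cV[R]_n) : 'cV[R]_n :=
  let w := aci_w A v in normalize ((A^T - (rq A w)%:M) *m w).

Fixpoint aci_v n (A : 'M[R]_n) (v0 : 'cV[R]_n) (k : nat) : 'cV[R]_n :=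
  if k is k'.+1 then aci_next A (aci_v A v0 k') else v0.

Definition aci_alpha n (A : 'M[R]_n) v0 (k : nat) : R := rq A (aci_v A v0 k).
Definition aci_beta n (A : 'M[R]_n) v0 (k : nat) : R :=
  rq A (aci_w A (aci_v A v0 k)).

Definition limit_vector n (u : nat -> 'cV[R]_n) (vstar : 'cV[R]_n) : Prop :=
  exists phi : nat -> nat, (forall k, (phi k < phi k.+1)%N) /\
    forall i : 'I_n, (fun k => u (phi k) i 0) @ \oo --> vstar i 0.

End Defs.

From HB Require Import structures.
From mathcomp Require Import all_boot all_order all_algebra.
From mathcomp Require Import all_classical all_reals all_analysis.
From mathcomp Require Import ring lra zify.
Set Implicit Arguments. Unset Strict Implicit. Unset Printing Implicit Defensive.
Import Order.TTheory GRing.Theory Num.Theory.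
Import numFieldNormedType.Exports.
Local Open Scope classical_set_scope.
Local Open Scope ring_scope.

(* A is orthogonal and A + A^T = diag(2 C), where C equals c_j on the j-th
   rotation block and 1 on the trailing [1].  Hence
   |(A - a) x|^2 = sum_j (1 + a^2 - 2 a C_j) pi_j, with pi_j the weight of x on
   block j, and likewise for A^T: each half-step of ACI(1) multiplies the block
   weights by 1 + a^2 - 2 a C_j and renormalises, a = sum_j C_j pi_j being the
   current alpha_k or beta_k.  If j0 is the first rotation block carrying weight
   in v_0 (one exists since d(A, v_0) >= 2), then a >= C_j0, so the odds
   (1 - pi_j0) / pi_j0 shrink by the factor 1 - C_j0 (C_(j0+1) - C_j0) < 1 at
   each half-step.  Hence alpha_k, beta_k -> c_j0, and every limit vector lives
   in block j0, where it is annihilated by X^2 - 2 c_j0 X + 1 but, as s_j0 != 0,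
   by no monic linear polynomial. *)

Lemma eqn_half_odd (l i : nat) : l./2 = i./2 -> (l == i) = (odd l == odd i).
Proof.
move=> e; apply/eqP/eqP => [->//|o].
by rewrite -(odd_double_half l) -(odd_double_half i) o e.
Qed.

Lemma sum_pair_support (V : nmodType) n (F : 'I_n -> V) j (hj : (j.*2.+1 < n)%N) :
  (forall l : 'I_n, (l : nat)./2 != j -> F l = 0) ->
  \sum_l F l = F (Ordinal (ltnW hj)) + F (Ordinal hj).
Proof.
move=> F0.
rewrite (bigD1 (Ordinal (ltnW hj))) //= (bigD1 (Ordinal hj)) /=; last first.
  by rewrite -val_eqE /= gtn_eqF.
rewrite addrA big1 ?addr0 // => l /andP[lne0 lne1]; apply: F0; apply/eqP => e.
have := odd_double_half l; rewrite e; case: (odd l) => /= el.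
  by move: lne1; rewrite -val_eqE /= -el add1n eqxx.
by move: lne0; rewrite -val_eqE /= -el add0n eqxx.
Qed.

(* |exp(i th) - a|^2 for t = cos th: the factor by which A - a scales the
   weight of a rotation block of cosine t. *)
Definition shift_gain (R : pzRingType) (a t : R) : R := 1 + a ^+ 2 - 2 * a * t.

Lemma shift_gain_ge0 (R : realFieldType) (a t : R) : t ^+ 2 <= 1 -> 0 <= shift_gain a t.
Proof. by move=> ht; rewrite /shift_gain; have := sqr_ge0 (a - t); nra. Qed.

Lemma shift_gain_gt0 (R : realFieldType) (a t : R) : t ^+ 2 < 1 -> 0 < shift_gain a t.
Proof. by move=> ht; rewrite /shift_gain; have := sqr_ge0 (a - t); nra. Qed.

Lemma shift_gain_le2 (R : realFieldType) (a t : R) :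
  0 <= a <= 1 -> 0 <= t -> shift_gain a t <= 2.
Proof. by rewrite /shift_gain => /andP[a0 a1] t0; nra. Qed.

Section ShiftedNormal.
Variables (R : realFieldType) (n : nat).

Definition diagf (h : nat -> R) : 'M[R]_n := diag_mx (\row_(i < n) h i).

Definition wsqnorm (h : nat -> R) (x : 'cV[R]_n) : R := \sum_(i < n) h i * x i 0 ^+ 2.

Lemma diagfE h (i j : 'I_n) : diagf h i j = (i == j)%:R * h i.
Proof. by rewrite !mxE; case: eqP => _; rewrite ?mul1r ?mul0r ?mulr1n ?mulr0n. Qed.

Lemma diagf_mulE p h (M : 'M[R]_(n, p)) i j : (diagf h *m M) i j = h i * M i j.
Proof. by rewrite mul_diag_mx !mxE. Qed.

Lemma mul_diagfE p h (M : 'M[R]_(p, n)) i j : (M *m diagf h) i j = M i j * h j.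
Proof. by rewrite mul_mx_diag !mxE. Qed.

Lemma wsqnorm_form h x : (x^T *m diagf h *m x) 0 0 = wsqnorm h x.
Proof. by rewrite mul_mx_diag !mxE; apply: eq_bigr => i _; rewrite !mxE; ring. Qed.

Lemma wsqnorm1_eq0 x : wsqnorm (fun=> 1) x = 0 -> x = 0.
Proof.
move=> /psumr_eq0P x0; apply/matrixP => i k; rewrite (ord1 k) mxE.
have /(_ i isT)/eqP : forall l : 'I_n, true -> 1 * x l 0 ^+ 2 = 0.
  by apply: x0 => l _; rewrite mul1r sqr_ge0.
by rewrite mul1r sqrf_eq0 => /eqP.
Qed.

Variables (B : 'M[R]_n) (cc : nat -> R).
Hypothesis B_orth : B^T *m B = 1%:M.
Hypothesis B_addT : B + B^T = diagf (fun i => cc i *+ 2).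

Lemma shift_normal_sq a :
  (B^T - a%:M) *m (B - a%:M) = diagf (fun i => shift_gain a (cc i)).
Proof.
rewrite mulmxBl !mulmxBr B_orth -scalar_mxM mul_scalar_mx mul_mx_scalar.
apply/matrixP => i j; have := congr1 (fun M : 'M[R]_n => M i j) B_addT.
rewrite !mxE /=; case: (eqVneq i j) => [->|ne] /=; rewrite ?mulr1n ?mulr0n => h.
  rewrite mulr2n in h; have -> : B j j = cc j by lra.
  by rewrite /shift_gain; ring.
have -> : B j i = - B i j by lra.
ring.
Qed.

Lemma wsqnorm_shift g a v : diagf g *m B = B *m diagf g ->
  wsqnorm g ((B - a%:M) *m v) = wsqnorm (fun i => g i * shift_gain a (cc i)) v.
Proof.
move=> gB; rewrite -!wsqnorm_form trmx_mul !mulmxA.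
have trBa : (B - a%:M)^T = B^T - a%:M by rewrite linearB /= tr_scalar_mx.
have gBa : (B^T - a%:M) *m diagf g = diagf g *m (B^T - a%:M).
  have gBT : B^T *m diagf g = diagf g *m B^T.
    by have := congr1 trmx gB; rewrite !trmx_mul tr_diag_mx => ->.
  by rewrite mulmxBl mulmxBr gBT scalar_mxC.
rewrite trBa -!mulmxA (mulmxA (B^T - a%:M)) gBa -(mulmxA (diagf g)).
rewrite (mulmxA (B^T - a%:M)) shift_normal_sq !mulmxA -(mulmxA v^T).
rewrite -(mulmxA _ (diagf g)) (mulmxA v^T); congr ((_ *m _ *m _) 0 0).
apply/matrixP => i j; rewrite mul_diag_mx !mxE.
by case: eqP => _; rewrite ?mulr1n ?mulr0n ?mulr0.
Qed.

End ShiftedNormal.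

Lemma cvg_wsqnorm (R : realType) n h (x : nat -> 'cV[R]_n) (y : 'cV[R]_n) :
  (forall i, (fun k => x k i 0) @ \oo --> y i 0) ->
  (fun k => wsqnorm h (x k)) @ \oo --> wsqnorm h y.
Proof.
move=> xy; apply: cvg_big => // [|i _]; first exact: add_continuous.
by apply: cvgM; [exact: cvg_cst | rewrite expr2; under eq_fun do rewrite expr2; exact: cvgM].
Qed.

Lemma wsqnorm_normalize (R : realType) n h (x : 'cV[R]_n) :
  wsqnorm h (normalize x) = wsqnorm h x / wsqnorm (fun=> 1) x.
Proof.
have nx : enorm x = Num.sqrt (wsqnorm (fun=> 1) x).
  by rewrite /enorm /wsqnorm; congr Num.sqrt; apply: eq_bigr => i _; rewrite mul1r.
have x_ge0 : 0 <= wsqnorm (fun=> 1) x by apply: sumr_ge0 => i _; rewrite mul1r sqr_ge0.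
rewrite /normalize /wsqnorm mulrC mulr_sumr; apply: eq_bigr => i _.
by rewrite mxE exprMn nx exprVn sqr_sqrtr // -/(wsqnorm _ x); ring.
Qed.

Lemma cvg_geometric_bound (R : realType) (u : nat -> R) (l K th : R) : 0 <= th < 1 ->
  (forall k, `|u k - l| <= K * th ^+ k) -> u @ \oo --> l.
Proof.
move=> /andP[th0 th1] hu.
have K0 : (fun k => K * th ^+ k) @ \oo --> 0.
  by rewrite -(mulr0 K); apply: cvgM; [exact: cvg_cst | apply: cvg_expr; rewrite ger0_norm].
apply/cvgrPdist_le => e e0; move/cvgrPdist_le: K0 => /(_ e e0); apply: filterS => k.
rewrite sub0r normrN => hk.
by rewrite distrC; apply: le_trans (hu k) (le_trans (ler_norm _) hk).
Qed.

Section RotationMatrix.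
Variables (R : realType) (m : nat) (b : bool) (c s : nat -> R).
Local Notation n := (m.*2 + b)%N.
Local Notation A := (rotA m b c s).

(* Block m, present iff b, is the trailing [1], a rotation of angle 0. *)
Definition block_cos (j : nat) : R := if (j < m)%N then c j else 1.

Lemma half_ord_le (i : 'I_n) : ((i : nat)./2 <= m)%N.
Proof.
have b1 : (nat_of_bool b <= 1)%N by case: b.
have /half_leq : ((i : nat) <= m.*2)%N.
  by have := ltn_ord i; move: (i : nat) => x; rewrite -!muln2; lia.
by rewrite doubleK.
Qed.

Lemma rotA_offblock (i k : 'I_n) : (i : nat)./2 != (k : nat)./2 -> A i k = 0.
Proof.
move=> ne; rewrite mxE (negbTE ne); case: ifP => // _; case: eqP => // e.
by move: ne; rewrite e eqxx.
Qed.

Lemma rotA_tail (i l : 'I_n) : (m <= (i : nat)./2)%N -> A l i = (l == i)%:R.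
Proof.
move=> mi; rewrite mxE; case: ifP => lm; last by rewrite -val_eqE; case: eqP.
have ne : (l : nat)./2 != (i : nat)./2 by rewrite neq_ltn (leq_trans lm mi).
rewrite (negbTE ne); case: eqP => [e|//].
by move: ne; rewrite e eqxx.
Qed.

Lemma rotA_block (l i : 'I_n) j :
  (l : nat)./2 = j -> (i : nat)./2 = j -> (j < m)%N ->
  A l i = if odd l == odd i then c j else if odd l then - s j else s j.
Proof.
move=> lj ij jm; rewrite mxE lj ij jm eqxx eqn_half_odd ?lj ?ij //.
by case: (odd l).
Qed.

Lemma rotA_addT : A + A^T = diagf n (fun i => block_cos i./2 *+ 2).
Proof.
apply/matrixP => i k; rewrite diagfE.
have -> : (A + A^T) i k = A i k + A k i by rewrite !mxE.
case: (eqVneq ((i : nat)./2) ((k : nat)./2)) => e; last first.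
  have -> : (i == k) = false by apply/negbTE; apply: contra e => /eqP ->.
  by rewrite (rotA_offblock e) rotA_offblock ?addr0 ?mul0r // eq_sym.
case: (ltnP ((i : nat)./2) m) => im.
  rewrite (rotA_block erefl (esym e) im) (rotA_block (esym e) erefl im).
  rewrite -val_eqE /= (eqn_half_odd e) /block_cos im.
  by case: (odd i); case: (odd k) => /=; rewrite ?mul1r ?mul0r ?subrr ?addrN ?addNr.
rewrite (rotA_tail _ im) (rotA_tail _ (leq_trans im (eq_leq e))) /block_cos ltnNge im /=.
by rewrite eq_sym; case: eqP => _; rewrite ?mul1r ?mul0r ?addr0.
Qed.

Lemma rotA_comm_blockdiag (G : nat -> R) :
  diagf n (fun i => G i./2) *m A = A *m diagf n (fun i => G i./2).
Proof.
apply/matrixP => i j; rewrite diagf_mulE mul_diagfE.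
case: (eqVneq ((i : nat)./2) ((j : nat)./2)) => e; first by rewrite e mulrC.
by rewrite rotA_offblock // mulr0 mul0r.
Qed.

Hypothesis cs1 : forall j, (j < m)%N -> c j ^+ 2 + s j ^+ 2 = 1.

Lemma rotA_orth : A^T *m A = 1%:M.
Proof.
apply/matrixP => i k; rewrite !mxE; under eq_bigr do rewrite mxE.
case: (eqVneq ((i : nat)./2) ((k : nat)./2)) => e; last first.
  have -> : (i == k) = false by apply/negbTE; apply: contra e => /eqP ->.
  rewrite big1 // => l _; case: (eqVneq ((l : nat)./2) ((i : nat)./2)) => el.
    by rewrite (rotA_offblock (i:=l) (k:=k)) ?mulr0 // el.
  by rewrite rotA_offblock ?mul0r.
case: (ltnP ((i : nat)./2) m) => im.
  have hj : (((i : nat)./2).*2.+1 < n)%N.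
    by move: im; move: ((i : nat)./2) => x; rewrite -!muln2; lia.
  rewrite (sum_pair_support hj); last by move=> l hl; rewrite rotA_offblock ?mul0r.
  have e0 : (Ordinal (ltnW hj) : nat)./2 = (i : nat)./2 by rewrite /= doubleK.
  have e1 : (Ordinal hj : nat)./2 = (i : nat)./2 by rewrite /= uphalf_double.
  rewrite (rotA_block e0 erefl im) (rotA_block e0 (esym e) im).
  rewrite (rotA_block e1 erefl im) (rotA_block e1 (esym e) im) /=.
  rewrite odd_double -val_eqE /= (eqn_half_odd e).
  by have := cs1 im; case: (odd i); case: (odd k) => /= h; rewrite -?h; ring.
have km : (m <= (k : nat)./2)%N by rewrite -e.
under eq_bigr => l _ do rewrite (rotA_tail l im) (rotA_tail l km).
have <- : i = k.
  apply/val_inj; change ((i : nat) = k); have := half_ord_le i; have := half_ord_le k.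
  have := odd_double_half i; have := odd_double_half k.
  have b1 : (nat_of_bool b <= 1)%N by case: b.
  move: (ltn_ord i) (ltn_ord k) im e b1; move: (i : nat) (k : nat) => x y.
  by rewrite -!muln2; case: (odd x); case: (odd y) => /=; lia.
rewrite eqxx (bigD1 i) //= eqxx mul1r big1 ?addr0 // => l /negbTE ->.
by rewrite mul0r.
Qed.

Lemma rotAT_orth : (A^T)^T *m A^T = 1%:M.
Proof. by rewrite trmxK; apply: mulmx1C; exact: rotA_orth. Qed.

Lemma rotAT_addT : A^T + (A^T)^T = diagf n (fun i => block_cos i./2 *+ 2).
Proof. by rewrite trmxK addrC rotA_addT. Qed.

Lemma rotAT_comm_blockdiag (G : nat -> R) :
  diagf n (fun i => G i./2) *m A^T = A^T *m diagf n (fun i => G i./2).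
Proof. by have := congr1 trmx (rotA_comm_blockdiag G); rewrite !trmx_mul tr_diag_mx => ->. Qed.

End RotationMatrix.

Section BlockWeightDynamics.
Variables (R : realFieldType) (N : nat) (C : nat -> R) (j0 : nat) (delta : R).

Definition mean (pi : nat -> R) : R := \sum_(j < N) C j * pi j.

Definition reweight (a : R) (pi : nat -> R) (j : nat) : R :=
  shift_gain a (C j) * pi j / \sum_(l < N) shift_gain a (C l) * pi l.

Definition rq_reweight (pi : nat -> R) : nat -> R := reweight (mean pi) pi.

Definition head_pmf (pi : nat -> R) : Prop :=
  [/\ forall j, (j < N)%N -> 0 <= pi j, \sum_(j < N) pi j = 1,
      forall j, (j < j0)%N -> pi j = 0 & 0 < pi j0].

Definition odds (pi : nat -> R) : R := (1 - pi j0) / pi j0.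

Definition rate : R := 1 - C j0 * delta.

Hypothesis j0N : (j0 < N)%N.
Hypothesis C01 : forall j, (j < N)%N -> 0 <= C j <= 1.
Hypothesis Cj0 : 0 < C j0 < 1.
Hypothesis delta01 : 0 < delta <= 1.
Hypothesis C_gap : forall j, (j0 < j < N)%N -> C j0 + delta <= C j.

Local Notation o0 := (Ordinal j0N).

Lemma rate_ge0 : 0 <= rate.
Proof. by rewrite /rate; case/andP: Cj0 => c0 c1; case/andP: delta01 => d0 d1; nra. Qed.

Lemma rate_lt1 : rate < 1.
Proof. by rewrite /rate; case/andP: Cj0 => c0 c1; case/andP: delta01 => d0 d1; nra. Qed.

Lemma head_pmf_rest pi : head_pmf pi -> \sum_(j < N | j != o0) pi j = 1 - pi j0.
Proof. by case=> _ pi1 _ _; rewrite -pi1 [in RHS](bigD1 o0) //= addrAC subrr add0r. Qed.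

Lemma head_pmf_le1 pi : head_pmf pi -> pi j0 <= 1.
Proof.
move=> hpi; rewrite -subr_ge0 -(head_pmf_rest hpi).
by case: hpi => pi_ge0 _ _ _; apply: sumr_ge0 => j _; apply: pi_ge0.
Qed.

Lemma odds_ge0 pi : head_pmf pi -> 0 <= odds pi.
Proof.
move=> hpi; have := head_pmf_le1 hpi; case: hpi => _ _ _ pj0 pj1.
by rewrite /odds divr_ge0 ?subr_ge0 // ltW.
Qed.

Lemma le_odds pi : head_pmf pi -> 1 - pi j0 <= odds pi.
Proof.
move=> hpi; have := head_pmf_le1 hpi; case: hpi => _ _ _ pj0 pj1.
by rewrite /odds ler_pdivlMr //; nra.
Qed.

Lemma pmf_close pi j : head_pmf pi -> (j < N)%N -> `|pi j - (j == j0)%:R| <= odds pi.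
Proof.
move=> hpi jN; apply: le_trans (le_odds hpi); have [pi_ge0 _ _ _] := hpi.
case: eqP => [->|/eqP ne].
  by rewrite ler0_norm ?opprB // subr_le0 head_pmf_le1.
rewrite subr0 ger0_norm ?pi_ge0 // -(head_pmf_rest hpi) (bigD1 (Ordinal jN)) //=.
by rewrite lerDl; apply: sumr_ge0 => i _; apply: pi_ge0.
Qed.

Lemma mean_close pi : head_pmf pi -> `|mean pi - C j0| <= odds pi.
Proof.
move=> hpi; apply: le_trans (le_odds hpi); have [pi_ge0 pi1 _ _] := hpi.
have -> : mean pi - C j0 = \sum_(j < N | j != o0) (C j - C j0) * pi j.
  rewrite /mean -[C j0 in LHS]mulr1 -pi1 mulr_sumr -sumrB (bigD1 o0) //= subrr add0r.
  by apply: eq_bigr => j _; rewrite mulrBl.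
rewrite -(head_pmf_rest hpi); apply: le_trans (ler_norm_sum _ _ _) _.
apply: ler_sum => j _; rewrite normrM (ger0_norm (pi_ge0 _ (ltn_ord j))).
apply: ler_piMl; first exact: pi_ge0.
have /andP[cj0 cj1] := C01 (ltn_ord j); have /andP[c0 c1] := C01 j0N.
by rewrite ler_norml; apply/andP; split; lra.
Qed.

Lemma mean_ge pi : head_pmf pi -> C j0 <= mean pi <= 1.
Proof.
case=> pi_ge0 pi1 pi_below _; apply/andP; split; rewrite /mean.
  rewrite -[C j0]mulr1 -pi1 mulr_sumr; apply: ler_sum => j _.
  case: (ltngtP j j0) => jj0.
  - by rewrite pi_below // !mulr0.
  - apply: ler_wpM2r; first exact: pi_ge0.
    have := C_gap (j := j); rewrite jj0 ltn_ord => /(_ isT).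
    by case/andP: delta01 => d0 _; lra.
  - by rewrite jj0.
rewrite -pi1; apply: ler_sum => j _; apply: ler_piMl; first exact: pi_ge0.
by case/andP: (C01 (ltn_ord j)).
Qed.

Section Reweight.
Variables (a : R) (pi : nat -> R).
Hypothesis hpi : head_pmf pi.
Hypothesis ha : C j0 <= a <= 1.

Let S := \sum_(l < N) shift_gain a (C l) * pi l.

Lemma shift_gain_j0_gt0 : 0 < shift_gain a (C j0).
Proof. by apply: shift_gain_gt0; case/andP: Cj0 => c0 c1; nra. Qed.

Lemma shift_gain_C_ge0 j : (j < N)%N -> 0 <= shift_gain a (C j).
Proof. by move=> /C01/andP[c0 c1]; apply: shift_gain_ge0; nra. Qed.

Lemma shift_gain_gap j : (j0 < j < N)%N ->
  shift_gain a (C j) <= rate * shift_gain a (C j0).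
Proof.
move=> /C_gap gap; case/andP: ha => a0 a1; case/andP: Cj0 => c0 c1.
case/andP: delta01 => d0 d1.
have F2 : shift_gain a (C j0) <= 2 by apply: shift_gain_le2; rewrite ?(ltW c0) //; lra.
have split_gain : shift_gain a (C j) = shift_gain a (C j0) - 2 * (a * (C j - C j0)).
  by rewrite /shift_gain; ring.
have Y_le : C j0 * delta <= a * (C j - C j0) by nra.
have YF : shift_gain a (C j0) * (C j0 * delta) <= 2 * (C j0 * delta).
  by apply: ler_wpM2r => //; rewrite mulr_ge0 // ltW.
by rewrite split_gain /rate mulrBl mul1r; lra.
Qed.

Lemma reweight_sum_gt0 : 0 < S.
Proof.
have [pi_ge0 _ _ pj0] := hpi; rewrite /S (bigD1 o0) //=.
rewrite ltr_pwDl ?mulr_gt0 ?shift_gain_j0_gt0 //.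
by apply: sumr_ge0 => j _; rewrite mulr_ge0 ?shift_gain_C_ge0 ?pi_ge0.
Qed.

Lemma reweight_head_pmf : head_pmf (reweight a pi).
Proof.
have S0 := reweight_sum_gt0; have [pi_ge0 pi1 pi_below pj0] := hpi; split.
- by move=> j jN; rewrite divr_ge0 ?mulr_ge0 ?shift_gain_C_ge0 ?pi_ge0 ?ltW.
- by rewrite /reweight -mulr_suml -/S divff ?lt0r_neq0.
- by move=> j jj0; rewrite /reweight pi_below // mulr0 mul0r.
- by rewrite /reweight divr_gt0 // mulr_gt0 // shift_gain_j0_gt0.
Qed.

Lemma odds_reweight : odds (reweight a pi) <= rate * odds pi.
Proof.
have S0 := reweight_sum_gt0; have [pi_ge0 _ pi_below pj0] := hpi.
set F := shift_gain a (C j0) * pi j0.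
have F0 : 0 < F by rewrite mulr_gt0 ?shift_gain_j0_gt0.
set U := \sum_(l < N | l != o0) shift_gain a (C l) * pi l.
have SU : S = F + U by rewrite /S (bigD1 o0).
have U_le : U <= rate * shift_gain a (C j0) * (1 - pi j0).
  rewrite -(head_pmf_rest hpi) mulr_sumr; apply: ler_sum => j jne.
  case: (ltngtP j j0) => jj0.
  - by rewrite pi_below // !mulr0.
  - by apply: ler_wpM2r; [exact: pi_ge0 | apply: shift_gain_gap; rewrite jj0 ltn_ord].
  - by move: jne; rewrite -val_eqE /= jj0 eqxx.
rewrite /odds /reweight -/S -/F.
have -> : (1 - F / S) / (F / S) = U / F by rewrite SU; field; rewrite -SU !lt0r_neq0.
have -> : rate * ((1 - pi j0) / pi j0) = rate * shift_gain a (C j0) * (1 - pi j0) / F.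
  by rewrite /F; field; rewrite !lt0r_neq0 ?shift_gain_j0_gt0.
by rewrite ler_pM2r ?invr_gt0.
Qed.

End Reweight.

Lemma odds_iter pi : head_pmf pi -> forall k,
  head_pmf (iter k rq_reweight pi) /\ odds (iter k rq_reweight pi) <= rate ^+ k * odds pi.
Proof.
move=> hpi; elim=> [|k [hk ok]] /=; first by rewrite expr0 mul1r.
have ha := mean_ge hk; split; first exact: reweight_head_pmf.
apply: le_trans (odds_reweight hk ha) _.
by rewrite exprS -mulrA ler_wpM2l ?rate_ge0.
Qed.

End BlockWeightDynamics.

Section BlockWeights.
Variables (R : realType) (m : nat) (b : bool) (c s : nat -> R).
Local Notation n := (m.*2 + b)%N.
Local Notation A := (rotA m b c s).
Local Notation C := (block_cos m c).

Definition block_weight (x : 'cV[R]_n) (j : nat) : R :=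
  wsqnorm (fun i => (i./2 == j)%:R) x.

Lemma block_weight_ge0 x j : 0 <= block_weight x j.
Proof. by apply: sumr_ge0 => i _; rewrite mulr_ge0 ?ler0n ?sqr_ge0. Qed.

Lemma sqr_coord_le_block_weight (x : 'cV[R]_n) (i : 'I_n) :
  x i 0 ^+ 2 <= block_weight x (i : nat)./2.
Proof.
rewrite /block_weight /wsqnorm (bigD1 i) //= eqxx mul1r lerDl.
by apply: sumr_ge0 => l _; rewrite mulr_ge0 ?ler0n ?sqr_ge0.
Qed.

Lemma block_weight_out x j : (m < j)%N -> block_weight x j = 0.
Proof.
move=> mj; apply: big1 => i _.
by rewrite (_ : _ == j = false) ?mul0r // ltn_eqF // (leq_ltn_trans (half_ord_le i)).
Qed.

Lemma wsqnorm_blocks (G : nat -> R) x :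
  wsqnorm (fun i => G i./2) x = \sum_(j < m.+1) G j * block_weight x j.
Proof.
rewrite /block_weight /wsqnorm; under [RHS]eq_bigr do rewrite mulr_sumr.
rewrite exchange_big /=; apply: eq_bigr => i _.
have im : ((i : nat)./2 < m.+1)%N by rewrite ltnS half_ord_le.
rewrite (bigD1 (Ordinal im)) //= eqxx mul1r big1 ?addr0 // => j ji.
rewrite (_ : (i : nat)./2 == j = false) ?mul0r ?mulr0 //.
by apply/negbTE; apply: contra ji => /eqP e; rewrite -val_eqE /= e.
Qed.

Lemma sum_block_weight x : \sum_(j < m.+1) block_weight x j = wsqnorm (fun=> 1) x.
Proof. by rewrite (wsqnorm_blocks (fun=> 1)); apply: eq_bigr => j _; rewrite mul1r. Qed.

Lemma rq_trmx (M : 'M[R]_n) x : rq M^T x = rq M x.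
Proof.
have trE (N : 'M[R]_1) : N^T 0 0 = N 0 0 by rewrite mxE.
by rewrite /rq -[RHS]trE !trmx_mul trmxK mulmxA.
Qed.

Lemma rq_rotA v : rq A v = mean m.+1 C (block_weight v).
Proof.
have addE (X Y : 'M[R]_1) : (X + Y) 0 0 = X 0 0 + Y 0 0 by rewrite mxE.
have : rq A v + rq A^T v = wsqnorm (fun i => C i./2 *+ 2) v.
  by rewrite /rq -addE -mulmxDl -mulmxDr rotA_addT wsqnorm_form.
rewrite rq_trmx (wsqnorm_blocks (fun j => C j *+ 2)).
have -> : \sum_(j < m.+1) C j *+ 2 * block_weight v j = mean m.+1 C (block_weight v) *+ 2.
  by rewrite /mean -sumrMnl; apply: eq_bigr => j _; rewrite mulrnAl.
by rewrite mulr2n; lra.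
Qed.

Section ShiftedBlocks.
Variable B : 'M[R]_n.
Hypothesis B_orth : B^T *m B = 1%:M.
Hypothesis B_addT : B + B^T = diagf n (fun i => C i./2 *+ 2).
Hypothesis B_comm : forall G : nat -> R,
  diagf n (fun i => G i./2) *m B = B *m diagf n (fun i => G i./2).

Lemma sqnorm_shift_blocks a v : wsqnorm (fun=> 1) ((B - a%:M) *m v) =
  \sum_(j < m.+1) shift_gain a (C j) * block_weight v j.
Proof.
rewrite (wsqnorm_shift B_orth B_addT _ _ (B_comm (fun=> 1))).
rewrite (wsqnorm_blocks (fun l => 1 * shift_gain a (C l))).
by apply: eq_bigr => j _; rewrite mul1r.
Qed.

Lemma block_weight_next a v :
  block_weight (normalize ((B - a%:M) *m v)) = reweight m.+1 C a (block_weight v).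
Proof.
apply: funext => j; rewrite /reweight -sqnorm_shift_blocks.
case: (ltnP m j) => [mj | jm].
  by rewrite !block_weight_out // mulr0 mul0r.
rewrite /block_weight wsqnorm_normalize; congr (_ / _).
rewrite (wsqnorm_shift B_orth B_addT _ _ (B_comm (fun l => (l == j)%:R))).
rewrite (wsqnorm_blocks (fun l => (l == j)%:R * shift_gain a (C l))).
rewrite (bigD1 (Ordinal (jm : (j < m.+1)%N))) //= eqxx mul1r big1 ?addr0 // => l lj.
rewrite (_ : (l : nat) == j = false) ?mul0r //.
by apply/negbTE; apply: contra lj => /eqP e; rewrite -val_eqE /= e.
Qed.

End ShiftedBlocks.

Lemma block_weight_head x j0 : (j0 < m.+1)%N -> x != 0 ->
  (forall j, j != j0 -> block_weight x j = 0) -> 0 < block_weight x j0.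
Proof.
move=> j0N x0 out; rewrite lt0r block_weight_ge0 andbT; apply: contra x0 => /eqP bw0.
apply/eqP/wsqnorm1_eq0; rewrite -sum_block_weight big1 // => j _.
by case: (eqVneq (j : nat) j0) => [->|]; [exact: bw0 | exact: out].
Qed.

End BlockWeights.

Section Grade.
Variables (R : realType) (n : nat) (M : 'M[R]_n).

Lemma annih_deg0 v : annih_deg M v 0 -> v = 0.
Proof.
case=> p [p_monic p_size]; rewrite /polyAv p_size big_ord1 /=.
have -> : p`_0 = 1 by move/monicP: p_monic; rewrite lead_coefE p_size.
by rewrite scale1r.
Qed.

Lemma annih_deg1 v : annih_deg M v 1 -> exists a, (M - a%:M) *m v = 0.
Proof.
case=> p [p_monic p_size]; rewrite /polyAv p_size !big_ord_recr big_ord0 /= add0r.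
have -> : p`_1 = 1 by move/monicP: p_monic; rewrite lead_coefE p_size.
move=> pv; exists (- p`_0); rewrite mulmxBl mul_scalar_mx scaleNr opprK.
by rewrite addrC -pv scale1r.
Qed.

Lemma annih_deg_fixed v : M *m v = v -> annih_deg M v 1.
Proof.
move=> Mv; exists (Poly [:: -1; 1]).
have pE : Poly [:: -1; 1] = [:: -1; 1] :> seq R by apply: (@PolyK _ 0); rewrite /= oner_neq0.
rewrite monicE lead_coefE pE; split => //.
by rewrite /polyAv pE /= !big_ord_recr big_ord0 /= add0r Mv scaleN1r scale1r addNr.
Qed.

Lemma annih_deg_rot v (x : R) :
  M *m (M *m v) = (x *+ 2) *: (M *m v) - v -> annih_deg M v 2.
Proof.
move=> MMv; exists (Poly [:: 1; - (x *+ 2); 1]).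
have pE : Poly [:: 1; - (x *+ 2); 1] = [:: 1; - (x *+ 2); 1] :> seq R.
  by apply: (@PolyK _ 0); rewrite /= oner_neq0.
rewrite monicE lead_coefE pE; split => //.
rewrite /polyAv pE /= !big_ord_recr big_ord0 /= add0r MMv !scale1r scaleNr.
by rewrite addrC addrA subrK subrr.
Qed.

Lemma grade_le v k : annih_deg M v k -> (grade M v <= k)%N.
Proof.
move=> vk; rewrite /grade; case: pselect => [e|e].
  by case: ex_minnP => k' _; apply; apply/asboolP.
by exfalso; apply: e; exists k; apply/asboolP.
Qed.

Lemma grade_annih v k : annih_deg M v k -> annih_deg M v (grade M v).
Proof.
move=> vk; rewrite /grade; case: pselect => [e|e].
  by case: ex_minnP => k' vk' _; apply/asboolP.
by exfalso; apply: e; exists k; apply/asboolP.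
Qed.

Lemma grade_eq2 v : v != 0 -> (forall a, (M - a%:M) *m v != 0) ->
  annih_deg M v 2 -> grade M v = 2%N.
Proof.
move=> v0 no_eigen v2; move: (grade_le v2) (grade_annih v2).
case: (grade M v) => [|[|[|k]]] // _.
- by move/annih_deg0 => e; move: v0; rewrite e eqxx.
- by case/annih_deg1 => a e; move: (no_eigen a); rewrite e eqxx.
Qed.

End Grade.

Section RotationGrade.
Variables (R : realType) (m : nat) (b : bool) (c s : nat -> R).
Hypothesis cs1 : forall j, (j < m)%N -> c j ^+ 2 + s j ^+ 2 = 1.
Local Notation n := (m.*2 + b)%N.
Local Notation A := (rotA m b c s).
Local Notation C := (block_cos m c).

Lemma sqnorm_shift_rotA a v : wsqnorm (fun=> 1) ((A - a%:M) *m v) =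
  \sum_(j < m.+1) shift_gain a (C j) * block_weight v j.
Proof.
exact: (sqnorm_shift_blocks (rotA_orth b cs1) (rotA_addT m b c s)
  (rotA_comm_blockdiag m b c s) a v).
Qed.

Lemma first_rotation_block v : (2 <= grade A v)%N ->
  exists j0, [/\ (j0 < m)%N, block_weight v j0 != 0
                 & forall j, (j < j0)%N -> block_weight v j = 0].
Proof.
move=> v_grade.
have [j|no_block] := pselect (exists j, (j < m)%N && (block_weight v j != 0)).
  have [j0 /andP[j0m j0_ne0] j0_min] := ex_minnP j.
  exists j0; split => // k kj0; apply/eqP/negPn/negP => k_ne0.
  have := j0_min k; rewrite (ltn_trans kj0 j0m) k_ne0 => /(_ isT).
  by rewrite leqNgt kj0.
suff /annih_deg_fixed/grade_le : A *m v = v by case: (grade A v) v_grade => [|[|]].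
(* With no weight on the rotation blocks, v lives in the trailing [1]. *)
apply/eqP; rewrite -subr_eq0 -{2}(mul1mx v) -mulmxBl; apply/eqP/wsqnorm1_eq0.
rewrite sqnorm_shift_rotA big1 // => j _; case: (ltnP j m) => jm.
  suff -> : block_weight v j = 0 by rewrite mulr0.
  by apply/eqP/negPn/negP => bj; apply: no_block; exists j; rewrite jm bj.
have -> : (j : nat) = m by apply/eqP; rewrite eqn_leq jm -ltnS ltn_ord.
by rewrite /block_cos ltnn /shift_gain expr1n !mulr1 (_ : 1 + 1 - 2 = 0 :> R) ?mul0r //; ring.
Qed.

Lemma grade_rotA_block x j0 : (j0 < m)%N -> c j0 ^+ 2 < 1 -> x != 0 ->
  (forall j, j != j0 -> block_weight x j = 0) -> grade A x = 2%N.
Proof.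
move=> j0m cj0 x0 out.
have x_j0 : 0 < block_weight x j0 by apply: block_weight_head => //; exact: ltnW.
have supp (i : 'I_n) : (i : nat)./2 != j0 -> x i 0 = 0.
  move=> ne; apply/eqP; rewrite -sqrf_eq0 eq_le sqr_ge0 andbT -(out _ ne).
  exact: sqr_coord_le_block_weight.
have ATx : A^T *m x = (c j0 *+ 2) *: x - A *m x.
  have -> : (c j0 *+ 2) *: x = diagf n (fun i => C i./2 *+ 2) *m x.
    apply/matrixP => i k; rewrite (ord1 k) diagf_mulE mxE.
    have [e|ne] := eqVneq ((i : nat)./2) j0; first by rewrite e /block_cos j0m.
    by rewrite supp // !mulr0.
  by rewrite -(rotA_addT m b c s) mulmxDl addrAC subrr add0r.
apply: grade_eq2 => // [a|].
  apply/eqP => /(congr1 (wsqnorm (fun=> 1))); rewrite sqnorm_shift_rotA.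
  rewrite (bigD1 (Ordinal (ltnW j0m : (j0 < m.+1)%N))) //= big1 => [|j j_ne]; last first.
    by rewrite out ?mulr0 // -val_eqE.
  rewrite addr0 /wsqnorm big1 => [|i _]; last by rewrite mxE expr0n mulr0.
  apply/eqP; rewrite mulf_neq0 ?lt0r_neq0 // shift_gain_gt0 //.
  by rewrite /block_cos j0m.
apply: (annih_deg_rot (x := c j0)).
have {3}-> : x = (c j0 *+ 2) *: (A *m x) - A *m (A *m x).
  by rewrite -{1}(mul1mx x) -(mulmx1C (rotA_orth b cs1)) -mulmxA ATx mulmxBr scalemxAr.
by rewrite opprB addrC subrK.
Qed.

End RotationGrade.

Section ACI.
Variables (R : realType) (m : nat) (b : bool) (c s : nat -> R).
Variables (v0 : 'cV[R]_(m.*2 + b)) (j0 : nat).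
Hypothesis cs1 : forall j, (j < m)%N -> c j ^+ 2 + s j ^+ 2 = 1.
Hypothesis s_neq0 : forall j, (j < m)%N -> s j != 0.
Hypothesis c0_gt0 : (0 < m)%N -> 0 < c 0%N.
Hypothesis c_incr : forall j, (j.+1 < m)%N -> c j < c j.+1.
Hypothesis v0_unit : enorm v0 = 1.
Hypothesis j0m : (j0 < m)%N.
Hypothesis v0_j0 : block_weight v0 j0 != 0.
Hypothesis v0_below : forall j, (j < j0)%N -> block_weight v0 j = 0.

Local Notation A := (rotA m b c s).
Local Notation C := (block_cos m c).
Local Notation pi0 := (block_weight v0).
Local Notation delta := (C j0.+1 - C j0).
Local Notation step := (rq_reweight m.+1 C).

Let j0m1 : (j0 < m.+1)%N := ltnW j0m.

Lemma c_gt0 j : (j < m)%N -> 0 < c j.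
Proof.
elim: j => [|j IH] jm; first exact: c0_gt0.
by have := c_incr jm; have := IH (ltnW jm); lra.
Qed.

Lemma c_lt1 j : (j < m)%N -> c j < 1.
Proof.
move=> jm; have := cs1 jm; have := c_gt0 jm.
have : 0 < s j ^+ 2 by rewrite lt_neqAle sqr_ge0 andbT eq_sym sqrf_eq0 s_neq0.
by nra.
Qed.

Lemma c_le i j : (i <= j)%N -> (j < m)%N -> c i <= c j.
Proof.
move=> ij; rewrite -(subnKC ij); elim: (j - i)%N => [|d IH]; first by rewrite addn0.
by rewrite addnS => jm; apply: le_trans (IH (ltnW jm)) (ltW (c_incr jm)).
Qed.

Lemma block_cos_j0 : C j0 = c j0.
Proof. by rewrite /block_cos j0m. Qed.

Lemma block_cos_bounds j : (j < m.+1)%N -> 0 <= C j <= 1.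
Proof.
rewrite /block_cos; case: ifP => [jm _|_ _]; last by rewrite ler01 lexx.
by rewrite !ltW ?c_gt0 ?c_lt1.
Qed.

Lemma block_cos_j0_bounds : 0 < C j0 < 1.
Proof. by rewrite block_cos_j0 c_gt0 ?c_lt1. Qed.

Lemma block_cos_gap j : (j0 < j < m.+1)%N -> C j0 + delta <= C j.
Proof.
move=> /andP[j0j jm]; rewrite addrC subrK /block_cos.
case: ltnP => j1m; case: ltnP => jm' //.
- exact: c_le.
- by rewrite ltW ?c_lt1.
- by have : (m <= j0.+1)%N := j1m; rewrite leqNgt (leq_ltn_trans j0j jm').
Qed.

Lemma delta_bounds : 0 < delta <= 1.
Proof.
have := block_cos_bounds (j := j0.+1) j0m; have := block_cos_j0_bounds.
have : C j0 < C j0.+1.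
  by rewrite /block_cos j0m; case: ifP => j1m; [exact: c_incr | exact: c_lt1].
by move=> ? /andP[? ?] /andP[? ?]; apply/andP; split; lra.
Qed.

Lemma pi0_head_pmf : head_pmf m.+1 j0 pi0.
Proof.
split => //; first by move=> j _; exact: block_weight_ge0.
- rewrite sum_block_weight; transitivity (enorm v0 ^+ 2); last by rewrite v0_unit expr1n.
  rewrite sqr_sqrtr; last by apply: sumr_ge0 => i _; rewrite sqr_ge0.
  by apply: eq_bigr => i _; rewrite mul1r.
- by rewrite lt0r v0_j0 block_weight_ge0.
Qed.

Lemma aci_block_weights k :
  block_weight (aci_v A v0 k) = iter k.*2 step pi0 /\
  block_weight (aci_w A (aci_v A v0 k)) = iter k.*2.+1 step pi0.
Proof.
have wE v : block_weight (aci_w A v) = step (block_weight v).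
  rewrite /aci_w rq_rotA.
  apply: (block_weight_next (rotA_orth b cs1) (rotA_addT m b c s) (rotA_comm_blockdiag m b c s)).
have nE v : block_weight (aci_next A v) = step (block_weight (aci_w A v)).
  rewrite /aci_next /= rq_rotA.
  apply: (block_weight_next (rotAT_orth b cs1) (rotAT_addT m b c s) (rotAT_comm_blockdiag m b c s)).
elim: k => [|k [vk wk]]; first by rewrite /= wE.
by rewrite doubleS /= wE nE wk.
Qed.

Lemma cvg_iter_odds (f : nat -> nat) (F : (nat -> R) -> R) (l : R) :
  (forall k, (k <= f k)%N) ->
  (forall pi, head_pmf m.+1 j0 pi -> `|F pi - l| <= odds j0 pi) ->
  (fun k => F (iter (f k) step pi0)) @ \oo --> l.
Proof.
move=> kf Fl.
have [t0 t1] : 0 <= rate C j0 delta /\ rate C j0 delta < 1.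
  by split; [apply: rate_ge0 | apply: rate_lt1]; rewrite ?block_cos_j0_bounds ?delta_bounds.
apply: (cvg_geometric_bound (K := odds j0 pi0) (th := rate C j0 delta)); first by rewrite t0.
move=> k; have [hk ok] := odds_iter j0m1 block_cos_bounds block_cos_j0_bounds delta_bounds
  block_cos_gap pi0_head_pmf (f k).
apply: le_trans (Fl _ hk) (le_trans ok _).
have odds0 := odds_ge0 j0m1 pi0_head_pmf.
rewrite mulrC; apply: ler_wpM2l => //.
by apply: (ler_wiXn2l t0 (ltW t1)); exact: kf.
Qed.

Lemma aci_alpha_cvg : aci_alpha A v0 @ \oo --> c j0.
Proof.
have -> : aci_alpha A v0 = fun k => mean m.+1 C (iter k.*2 step pi0).
  by apply: funext => k; rewrite /aci_alpha rq_rotA (aci_block_weights k).1.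
rewrite -block_cos_j0; apply: cvg_iter_odds => [k|pi]; first by rewrite -addnn leq_addr.
by move=> hpi; exact: (mean_close j0m1 block_cos_bounds hpi).
Qed.

Lemma aci_beta_cvg : aci_beta A v0 @ \oo --> c j0.
Proof.
have -> : aci_beta A v0 = fun k => mean m.+1 C (iter k.*2.+1 step pi0).
  by apply: funext => k; rewrite /aci_beta rq_rotA (aci_block_weights k).2.
rewrite -block_cos_j0; apply: cvg_iter_odds => [k|pi].
  by rewrite -addnn ltnW // ltnS leq_addr.
by move=> hpi; exact: (mean_close j0m1 block_cos_bounds hpi).
Qed.

Lemma limit_vector_block_weight vstar : limit_vector (aci_v A v0) vstar ->
  forall j, block_weight vstar j = (j == j0)%:R.
Proof.
move=> [phi [phi_incr phi_cvg]] j.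
have [mj|jm] := ltnP m j.
  by rewrite block_weight_out // gtn_eqF // (ltn_trans j0m mj).
have lim_vstar : (fun k => block_weight (aci_v A v0 (phi k)) j) @ \oo --> block_weight vstar j.
  exact: cvg_wsqnorm.
have lim_j0 : (fun k => block_weight (aci_v A v0 (phi k)) j) @ \oo --> ((j == j0)%:R : R).
  under eq_fun do rewrite (aci_block_weights _).1.
  apply: (cvg_iter_odds (F := fun pi => pi j)) => [k|pi].
    have phik : (k <= phi k)%N by elim: k => // k IH; apply: leq_ltn_trans IH (phi_incr k).
    by rewrite -addnn (leq_trans phik) ?leq_addr.
  by move=> hpi; exact: (pmf_close j0m1 hpi jm).
exact: norm_cvg_unique lim_vstar lim_j0.
Qed.

Lemma limit_vector_grade vstar : limit_vector (aci_v A v0) vstar -> grade A vstar = 2%N.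
Proof.
move=> /limit_vector_block_weight vstar_bw.
apply: (grade_rotA_block cs1 j0m) => [|| j ne].
- by have := c_gt0 j0m; have := c_lt1 j0m; nra.
- apply/eqP => vstar0; have := vstar_bw j0; rewrite eqxx vstar0 /block_weight /wsqnorm.
  by rewrite big1 => [/eqP|i _]; rewrite ?(eq_sym 0) ?oner_eq0 // mxE expr0n mulr0.
- by rewrite vstar_bw (negbTE ne).
Qed.

End ACI.

Theorem lemma4p4 (R : realType) (m : nat) (b : bool) (c s : nat -> R)
  (v0 : 'cV[R]_(m.*2 + b)) :
  (forall j, (j < m)%N -> c j ^+ 2 + s j ^+ 2 = 1) ->
  (forall j, (j < m)%N -> s j != 0) ->
  ((0 < m)%N -> 0 < c 0%N) ->
  (forall j, (j.+1 < m)%N -> c j < c j.+1) ->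
  enorm v0 = 1 ->
  (2 <= grade (rotA m b c s) v0)%N ->
  exists alpha beta : R,
    [/\ aci_alpha (rotA m b c s) v0 @ \oo --> alpha,
        aci_beta (rotA m b c s) v0 @ \oo --> beta,
        alpha = beta,
        exists2 j, (j < m)%N & alpha = c j
      & forall vstar, limit_vector (aci_v (rotA m b c s) v0) vstar ->
          grade (rotA m b c s) vstar = 2%N].
Proof.
move=> cs1 s_neq0 c0_gt0 c_incr v0_unit v0_grade.
have [j0 [j0m v0_j0 v0_below]] := first_rotation_block cs1 v0_grade.
exists (c j0), (c j0); split => //.
- exact: aci_alpha_cvg.
- exact: aci_beta_cvg.
- by exists j0.
- by move=> vstar; apply: (limit_vector_grade (j0 := j0)).
Qed.
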